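(* Let $d\ge2$ and $n\ge2$. There is no polynomial $\varphi$ in the coefficients of $f\in\mathbb R[x]_d$ with $\varphi(f)>0$ for all $f$ in the interior of $\mathcal C_{n,d}$ and $\varphi(f)=0$ for all $f$ on the boundary of $\mathcal C_{n,d}$. Consequently $-\log\varphi(f)$ cannot be a barrier for $\mathcal C_{n,d}$ with $\varphi$ polynomial, and $\mathcal C_{n,d}$ is not representable by a linear matrix inequality (no symmetric matrix pencil $L(f)$ linear in the coefficients of $f$ with $\mathcal C_{n,d}=\{f:L(f)\succeq0\}$ and $L(f)\succ0$ on the interior).
   Context: $x=(x_1,\dots,x_n)$; $\mathbb R[x]_d$ is the space of real forms of degree $d$ with the Euclidean topology on coefficients. $\mathcal C_{n,d}=\{f\in\mathbb R[x]_d: f(x)\ge0\ \forall x\in\mathbb R^n_+\}$ is the cone of copositive forms. *)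

From Stdlib Require Import Reals.
From mathcomp Require Import all_boot.

Set Implicit Arguments.
Unset Strict Implicit.
Unset Printing Implicit Defensive.
Delimit Scope R_scope with Re.

Definition mon (n d : nat) :=
  {a : {ffun 'I_n -> 'I_d.+1} | (\sum_(i < n) (nat_of_ord (a i)) == d)%N}.

(* A real form of degree d in n variables = its coefficient vector
   (R[x]_d is identified with R^{monomials}). *)
Definition form (n d : nat) := mon n d -> R.

Definition eval_form (n d : nat) (f : form n d) (x : 'I_n -> R) : R :=
  \big[Rplus/0%Re]_(a : mon n d)
     (f a * \big[Rmult/1%Re]_(i < n) (x i ^ (nat_of_ord (val a i))))%Re.

Definition copositive (n d : nat) (f : form n d) : Prop :=
  forall x : 'I_n -> R, (forall i, (0 <= x i)%Re) -> (0 <= eval_form f x)%Re.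

(* Euclidean topology on coefficients, via the (equivalent) sup-norm. *)
Definition cdist (n d : nat) (f g : form n d) : R :=
  \big[Rmax/0%Re]_(a : mon n d) Rabs (f a - g a).

Definition cinterior (n d : nat) (S : form n d -> Prop) (f : form n d) : Prop :=
  exists eps : R, (0 < eps)%Re /\ forall g, (cdist f g < eps)%Re -> S g.

Definition cboundary (n d : nat) (S : form n d -> Prop) (f : form n d) : Prop :=
  forall eps : R, (0 < eps)%Re ->
    (exists g, (cdist f g < eps)%Re /\ S g) /\
    (exists g, (cdist f g < eps)%Re /\ ~ S g).

Definition poly_in_coeffs (n d : nat) (phi : form n d -> R) : Prop :=
  exists s : list (R * (mon n d -> nat)),
    forall f : form n d,
      phi f = foldr
                (fun (t : R * (mon n d -> nat)) acc =>
                   (fst t * \big[Rmult/1%Re]_(a : mon n d) (f a ^ snd t a) + acc)%Re)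
                0%Re s.

Definition rmat (m : nat) := 'I_m -> 'I_m -> R.

Definition sym_mat (m : nat) (A : rmat m) : Prop := forall i j, A i j = A j i.

Definition qform (m : nat) (A : rmat m) (v : 'I_m -> R) : R :=
  \big[Rplus/0%Re]_(i < m) \big[Rplus/0%Re]_(j < m) (v i * A i j * v j)%Re.

Definition psd (m : nat) (A : rmat m) : Prop := forall v, (0 <= qform A v)%Re.

Definition pd (m : nat) (A : rmat m) : Prop :=
  forall v, (exists i, v i <> 0%Re) -> (0 < qform A v)%Re.

Definition pencil (n d m : nat) (L0 : rmat m) (La : mon n d -> rmat m)
  (f : form n d) : rmat m :=
  fun i j => (L0 i j + \big[Rplus/0%Re]_(a : mon n d) (f a * La a i j))%Re.

Definition lmi_representable (n d : nat) : Prop :=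
  exists (m : nat) (L0 : rmat m) (La : mon n d -> rmat m),
    sym_mat L0 /\ (forall a, sym_mat (La a)) /\
    (forall f : form n d, copositive f <-> psd (pencil L0 La f)) /\
    (forall f : form n d, cinterior (@copositive n d) f -> pd (pencil L0 La f)).

(* Along the curve w |-> f_w = sum_(j < d-1) x0^j x1^(d-2-j) (x1 - w x0)^2 + (the
   monomials involving x2, ..., x_(n-1)), whose coefficients are polynomials in w,
   every f_w with w > 0 is copositive with the zero (1, w, 0, ..., 0) in the
   orthant, hence lies on the boundary of C_{n,d}, while f_(-1) has all
   coefficients >= 1 and lies in the interior.  A polynomial vanishing on the
   boundary thus restricts to a polynomial in w vanishing on (0, oo), hence
   everywhere, and vanishes at f_(-1).
   For an LMI representation L, det L(f) is such a polynomial: it is nonzero at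
   interior points, where L(f) is positive definite, and zero at copositive
   boundary points, since an invertible positive semidefinite L(f) is coercive
   and stays positive semidefinite on a neighbourhood of f. *)

From Stdlib Require Import Reals Lra Psatz Classical.
From mathcomp Require Import all_boot all_algebra perm zify Rstruct.

Set Implicit Arguments.
Unset Strict Implicit.
Unset Printing Implicit Defensive.

Import GRing.Theory.
Local Open Scope R_scope.

(* Bigop lemmas leave the monoid operations of [R] as projections of their
   canonical structures, which [ring] does not see through until simplified. *)
Ltac ring_R := simpl; ring.

Definition poly_fun (g : R -> R) := exists p : {poly R}, forall w, g w = p.[w]%R.

Lemma poly_fun_cst c : poly_fun (fun _ => c).
Proof. by exists c%:P%R => w; rewrite hornerC. Qed.

Lemma poly_fun_id : poly_fun id.
Proof. by exists 'X%R => w; rewrite hornerX. Qed.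

Lemma poly_fun_add f g : poly_fun f -> poly_fun g -> poly_fun (fun w => f w + g w).
Proof. by move=> [p hp] [q hq]; exists (p + q)%R => w; rewrite hornerD -hp -hq. Qed.

Lemma poly_fun_mul f g : poly_fun f -> poly_fun g -> poly_fun (fun w => f w * g w).
Proof. by move=> [p hp] [q hq]; exists (p * q)%R => w; rewrite hornerM -hp -hq. Qed.

Lemma poly_fun_pow f k : poly_fun f -> poly_fun (fun w => f w ^ k).
Proof. by move=> [p hp]; exists (p ^+ k)%R => w; rewrite horner_exp -hp RpowE. Qed.

Lemma poly_fun_big (I : Type) (op : R -> R -> R) (idx : R) (r : seq I) (P : pred I)
    (F : I -> R -> R) :
  (forall f g, poly_fun f -> poly_fun g -> poly_fun (fun w => op (f w) (g w))) ->
  (forall i, poly_fun (F i)) -> poly_fun (fun w => \big[op/idx]_(i <- r | P i) F i w).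
Proof.
move=> hop hF; elim: r => [|i r [p hp]].
  by exists idx%:P%R => w; rewrite big_nil hornerC.
case: (boolP (P i)) => hPi.
  have [q hq] := hop _ _ (hF i) (ex_intro _ p hp).
  by exists q => w; rewrite big_cons hPi hq.
by exists p => w; rewrite big_cons (negbTE hPi) hp.
Qed.

Lemma poly_fun_sum (I : Type) (r : seq I) (P : pred I) (F : I -> R -> R) :
  (forall i, poly_fun (F i)) -> poly_fun (fun w => \big[Rplus/0]_(i <- r | P i) F i w).
Proof. exact: poly_fun_big poly_fun_add. Qed.

Lemma poly_fun_prod (I : Type) (r : seq I) (P : pred I) (F : I -> R -> R) :
  (forall i, poly_fun (F i)) -> poly_fun (fun w => \big[Rmult/1]_(i <- r | P i) F i w).
Proof. exact: poly_fun_big poly_fun_mul. Qed.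

Lemma poly_fun_eq0 g : poly_fun g -> (forall w, 0 < w -> g w = 0) -> forall w, g w = 0.
Proof.
move=> [p hp] hpos w; suff p0 : p = 0%R by rewrite hp p0 horner0.
apply: contraTeq isT => p_neq0.
pose rs := [seq INR i.+1 | i <- iota 0 (size p)].
have rs_roots : all (root p) rs.
  apply/allP => _ /mapP [i _ ->]; apply/eqP; rewrite -hp; apply: hpos.
  exact/lt_0_INR/Nat.lt_0_succ.
have rs_uniq : uniq rs by rewrite map_inj_uniq ?iota_uniq // => i j /INR_eq [].
by have := max_poly_roots p_neq0 rs_roots rs_uniq; rewrite size_map size_iota ltnn.
Qed.

Lemma poly_fun_poly_in_coeffs n d (phi : form n d -> R) (F : R -> form n d) :
  poly_in_coeffs phi -> (forall a, poly_fun (fun w => F w a)) ->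
  poly_fun (fun w => phi (F w)).
Proof.
move=> [s hs] hF; have [p hp] : poly_fun (fun w => foldr
    (fun (t : R * (mon n d -> nat)) acc =>
       t.1 * \big[Rmult/1]_(a : mon n d) (F w a ^ t.2 a) + acc) 0 s).
  elim: s {hs} => [|t s IH] /=; first exact: poly_fun_cst.
  apply: poly_fun_add IH; apply: poly_fun_mul; first exact: poly_fun_cst.
  by apply: poly_fun_prod => a; apply: poly_fun_pow.
by exists p => w; rewrite hs hp.
Qed.

Definition mx m (A : rmat m) : 'M[R]_m := \matrix_(i, j) A i j.

Lemma poly_fun_det m (M : R -> rmat m) :
  (forall i j, poly_fun (fun w => M w i j)) -> poly_fun (fun w => \det (mx (M w)))%R.
Proof.
move=> hM; have [p hp] : poly_fun (fun w => \sum_(s : 'S_m) (-1) ^+ s * \prod_i M w i (s i))%R.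
  apply: poly_fun_sum => s; apply: poly_fun_mul; first exact: poly_fun_cst.
  by apply: poly_fun_prod => i; apply: hM.
exists p => w; rewrite -hp /determinant; apply: eq_bigr => s _.
by congr (_ * _)%R; apply: eq_bigr => i _; rewrite mxE.
Qed.

Lemma sumR_ge0 (I : Type) (r : seq I) (P : pred I) (F : I -> R) :
  (forall i, P i -> 0 <= F i) -> 0 <= \big[Rplus/0]_(i <- r | P i) F i.
Proof. by move=> hF; apply: big_ind => // *; lra. Qed.

Lemma sumR_le (I : Type) (r : seq I) (P : pred I) (F G : I -> R) :
  (forall i, P i -> F i <= G i) ->
  \big[Rplus/0]_(i <- r | P i) F i <= \big[Rplus/0]_(i <- r | P i) G i.
Proof. by move=> hFG; apply: big_ind2 => // *; lra. Qed.

Lemma sumR_abs_le (I : Type) (r : seq I) (P : pred I) (F : I -> R) :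
  Rabs (\big[Rplus/0]_(i <- r | P i) F i) <= \big[Rplus/0]_(i <- r | P i) Rabs (F i).
Proof.
apply: (big_ind2 (fun x y => Rabs x <= y)); first by rewrite Rabs_R0; lra.
  by move=> x1 y1 x2 y2 h1 h2; apply: Rle_trans (Rabs_triang _ _) _; lra.
by move=> i _; lra.
Qed.

Lemma prodR_ge0 (I : Type) (r : seq I) (P : pred I) (F : I -> R) :
  (forall i, P i -> 0 <= F i) -> 0 <= \big[Rmult/1]_(i <- r | P i) F i.
Proof. by move=> hF; apply: big_ind => // *; [lra | apply: Rmult_le_pos]. Qed.

Lemma sumR_ge_term (I : finType) (F : I -> R) j :
  (forall i, 0 <= F i) -> F j <= \big[Rplus/0]_i F i.
Proof.
move=> hF; rewrite (bigD1 j) //=.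
have : 0 <= \big[Rplus/0]_(i | i != j) F i by apply: sumR_ge0.
lra.
Qed.

Lemma maxR_ge (I : finType) (F : I -> R) j : F j <= \big[Rmax/0]_i F i.
Proof.
rewrite unlock /=; elim: (index_enum I) (mem_index_enum j) => [|k r IH] //=.
rewrite inE => /orP [/eqP <-|/IH]; first exact: Rmax_l.
by move/Rle_trans; apply; apply: Rmax_r.
Qed.

Lemma maxR_le (I : finType) (F : I -> R) c :
  0 <= c -> (forall i, F i <= c) -> \big[Rmax/0]_i F i <= c.
Proof. by move=> c_ge0 hF; apply: (big_ind (fun y => y <= c)) => // *; apply: Rmax_lub. Qed.

Section Forms.
Variables n d : nat.

Definition mono (a : mon n d) (x : 'I_n -> R) : R :=
  \big[Rmult/1]_(i < n) x i ^ sval a i.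

Lemma mono_ge0 a x : (forall i, 0 <= x i) -> 0 <= mono a x.
Proof. by move=> hx; apply: prodR_ge0 => i _; apply: pow_le. Qed.

Definition basis (b : mon n d) : form n d := fun a => if a == b then 1 else 0.

Lemma sum_basis b (G : mon n d -> R) : \big[Rplus/0]_a (basis b a * G a) = G b.
Proof.
rewrite (bigD1 b) //= big1 /basis ?eqxx; first ring.
by move=> a /negbTE ->; ring.
Qed.

Lemma eval_basis b x : eval_form (basis b) x = mono b x.
Proof. exact: sum_basis. Qed.

Lemma eval_form_addZ (f g : form n d) c x :
  eval_form (fun a => f a + c * g a) x = eval_form f x + c * eval_form g x.
Proof.
rewrite /eval_form big_distrr -big_split /=; apply: eq_bigr => a _; ring.
Qed.

Lemma cdist_ge (f g : form n d) a : Rabs (f a - g a) <= cdist f g.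
Proof. exact: (maxR_ge (fun a => Rabs (f a - g a))). Qed.

Lemma cdist_addZ_basis (f : form n d) b c :
  cdist f (fun a => f a + c * basis b a) <= Rabs c.
Proof.
apply: maxR_le => [|a]; first exact: Rabs_pos.
have -> : f a - (f a + c * basis b a) = - (c * basis b a) by ring.
rewrite Rabs_Ropp Rabs_mult /basis; case: eqP => _.
  by rewrite Rabs_R1; lra.
by rewrite Rabs_R0 Rmult_0_r; apply: Rabs_pos.
Qed.

Lemma cinterior_not_cboundary (S : form n d -> Prop) f :
  cinterior S f -> ~ cboundary S f.
Proof.
move=> [eps [eps_gt0 hS]] /(_ eps eps_gt0) [_ [g [hg hnS]]].
exact: hnS (hS g hg).
Qed.

Lemma copositive_cinterior (f : form n d) :
  (forall a, 1 <= f a) -> cinterior (@copositive n d) f.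
Proof.
move=> f_ge1; exists 1; split=> [|g hg x hx]; first lra.
apply: sumR_ge0 => a _; apply: Rmult_le_pos; last exact: mono_ge0.
have := cdist_ge f g a; have := Rle_abs (f a - g a); have := f_ge1 a; lra.
Qed.

Lemma copositive_cboundary (f : form n d) b x :
  copositive f -> (forall i, 0 <= x i) -> eval_form f x = 0 -> 0 < mono b x ->
  cboundary (@copositive n d) f.
Proof.
move=> f_copos x_ge0 fx0 bx_gt0 eps eps_gt0; split.
  exists f; split; last by [].
  by apply: Rle_lt_trans eps_gt0; apply: maxR_le => [|a]; rewrite ?Rminus_diag ?Rabs_R0; lra.
exists (fun a => f a + - (eps / 2) * basis b a); split.
  by apply: Rle_lt_trans (cdist_addZ_basis f b _) _; rewrite Rabs_Ropp Rabs_pos_eq; lra.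
move/(_ x x_ge0); rewrite eval_form_addZ eval_basis fx0; nra.
Qed.

End Forms.

Section Curve.
Variables n' d : nat.
Hypothesis d_ge2 : (2 <= d)%N.
Local Notation n := n'.+2.
Local Notation i0 := (ord0 : 'I_n).
Local Notation i1 := (lift ord0 ord0 : 'I_n).
Local Notation tail i := (lift ord0 (lift ord0 i) : 'I_n).

(* The exponent of x0^k x1^(d - k); [minn] only makes it total in [k]. *)
Definition binexp (k : nat) : {ffun 'I_n -> 'I_d.+1} :=
  [ffun i : 'I_n => inord (if val i == 0%N then minn k d
                           else if val i == 1%N then (d - minn k d)%N else 0%N)].

Lemma binexp_i0 k : val (binexp k i0) = minn k d.
Proof. by rewrite ffunE /= inordK // ltnS geq_minr. Qed.

Lemma binexp_i1 k : val (binexp k i1) = (d - minn k d)%N.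
Proof. by rewrite ffunE /= inordK // ltnS leq_subr. Qed.

Lemma binexp_tail k i : val (binexp k (tail i)) = 0%N.
Proof. by rewrite ffunE /= inordK. Qed.

Lemma binexp_sum k : (\sum_(i < n) val (binexp k i) == d)%N.
Proof.
rewrite !big_ord_recl binexp_i0 binexp_i1 big1 => [|i _]; last exact: binexp_tail.
by rewrite addn0 subnKC ?geq_minr.
Qed.

Definition binmon (k : nat) : mon n d := exist _ (binexp k) (binexp_sum k).

Lemma mono_binmon k x : (k <= d)%N -> mono (binmon k) x = x i0 ^ k * x i1 ^ (d - k).
Proof.
move=> k_le_d; rewrite /mono !big_ord_recl /= binexp_i0 binexp_i1 (minn_idPl k_le_d).
by rewrite big1 ?Rmult_1_r // => i _; rewrite binexp_tail.
Qed.

Definition binary (a : mon n d) : bool := (val (val a i0) + val (val a i1) == d)%N.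

Lemma binary_tail a : binary a = (\sum_(i < n') val (val a (tail i)) == 0)%N.
Proof.
move: (valP a); rewrite !big_ord_recl addnA /binary.
move: (val (val a i0) + val (val a i1))%N (\sum_(i < n') val (val a (tail i)))%N.
by move=> p s /eqP <-; rewrite -{1}[p]addn0 eqn_add2l eq_sym.
Qed.

Lemma binmonE a : binary a -> a = binmon (val (val a i0)).
Proof.
move=> a_bin; have a0_le_d : (val (val a i0) <= d)%N.
  exact: leq_trans (leq_addr _ _) (eq_leq (eqP a_bin)).
have := a_bin; rewrite binary_tail sum_nat_eq0 => /forallP a_tail.
apply: val_inj; apply/ffunP => i; apply: val_inj => /=.
case: i => -[|[|k]] hk.
- have -> : Ordinal hk = i0 by apply: val_inj.
  by rewrite binexp_i0 (minn_idPl a0_le_d).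
- have -> : Ordinal hk = i1 by apply: val_inj.
  rewrite binexp_i1 (minn_idPl a0_le_d).
  by apply/eqP; rewrite -(eqn_add2l (val (val a i0))) subnKC.
- have -> : Ordinal hk = tail (Ordinal (hk : k < n')%N) by apply: val_inj.
  by rewrite binexp_tail (eqP (a_tail _)).
Qed.

Lemma mono_nonbinary a x :
  ~~ binary a -> (forall i, x (tail i) = 0) -> mono a x = 0.
Proof.
rewrite binary_tail sum_nat_eq0 negb_forall => /existsP [i ai_neq0] x_tail.
rewrite /mono !big_ord_recl (bigD1 i) //= x_tail pow_ne_zero; last exact/eqP.
by rewrite Rmult_0_l !Rmult_0_r.
Qed.

(* f_w = sum_(j < d - 1) x0^j x1^(d - 2 - j) (x1 - w x0)^2 + (every monomial
   involving one of x2, ..., x_(n-1)). *)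
Definition curve (w : R) : form n d := fun a =>
  \big[Rplus/0]_(j < d.-1) (basis (binmon j) a + (-2 * w) * basis (binmon j.+1) a
                            + w ^ 2 * basis (binmon j.+2) a)
  + (if binary a then 0 else 1).

Lemma eval_curve w x : eval_form (curve w) x =
  \big[Rplus/0]_(j < d.-1) (x i0 ^ j * x i1 ^ (d.-2 - j) * (x i1 - w * x i0) ^ 2)
  + \big[Rplus/0]_(a | ~~ binary a) mono a x.
Proof.
rewrite /eval_form; under [LHS]eq_bigr => a _ do rewrite Rmult_plus_distr_r big_distrl.
rewrite big_split exchange_big; congr (_ + _); last first.
  rewrite [RHS]big_mkcond; apply: eq_bigr => a _.
  by case: (binary a); [rewrite Rmult_0_l | rewrite Rmult_1_l].
apply: eq_bigr => j _; have j_lt := ltn_ord j.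
transitivity (mono (binmon j) x + (-2 * w) * mono (binmon j.+1) x
              + w ^ 2 * mono (binmon j.+2) x).
  rewrite -!(sum_basis _ (fun a => mono a x)) !big_distrr -!big_split /=.
  by apply: eq_bigr => a _; rewrite -[\big[Rmult/1]_(i < n) _]/(mono a x); ring.
rewrite !mono_binmon; try lia.
have -> : (d - j = (d.-2 - j).+2)%N by lia.
have -> : (d - j.+1 = (d.-2 - j).+1)%N by lia.
have -> : (d - j.+2 = d.-2 - j)%N by lia.
cbn [pow]; ring.
Qed.

Lemma curve_copositive w : copositive (curve w).
Proof.
move=> x x_ge0; rewrite eval_curve; apply: Rplus_le_le_0_compat.
  apply: sumR_ge0 => j _; apply: Rmult_le_pos; last exact: pow2_ge_0.
  by apply: Rmult_le_pos; apply: pow_le.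
by apply: sumR_ge0 => a _; apply: mono_ge0.
Qed.

Definition curve_root (w : R) : 'I_n -> R :=
  fun i => if val i == 0%N then 1 else if val i == 1%N then w else 0.

Lemma curve_root_ge0 w : 0 <= w -> forall i, 0 <= curve_root w i.
Proof. by move=> w_ge0 i; rewrite /curve_root; case: ifP => _; [lra | case: ifP => _; lra]. Qed.

Lemma eval_curve_root w : eval_form (curve w) (curve_root w) = 0.
Proof.
rewrite eval_curve big1 => [|j _]; last first.
  by rewrite /curve_root /= Rmult_1_r Rminus_diag; ring.
by rewrite big1 ?Rplus_0_r // => a a_nbin; apply: mono_nonbinary.
Qed.

Lemma basis01 (b a : mon n d) : basis b a = 0 \/ basis b a = 1.
Proof. by rewrite /basis; case: eqP; [right | left]. Qed.

(* The binary monomial x0^k x1^(d - k) occurs in the square of index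
   j = min(k, d - 2), where all coefficients of (x1 + x0)^2 are positive. *)
Lemma curve_coef_ge1 a : 1 <= curve (-1) a.
Proof.
pose T j := basis (binmon j) a + (-2 * -1) * basis (binmon j.+1) a
            + (-1) ^ 2 * basis (binmon j.+2) a.
have T_ge : forall j i, (i <= 2)%N -> 0 <= T j /\ basis (binmon (j + i)) a <= T j.
  move=> j [|[|[|i]]] // _; rewrite ?addn0 ?addn1 ?addn2 /T /=;
  case: (basis01 (binmon j) a); case: (basis01 (binmon j.+1) a);
  case: (basis01 (binmon j.+2) a); lra.
have T_ge0 j : 0 <= T j by case: (T_ge j 0%N isT).
have -> : curve (-1) a = \big[Rplus/0]_(j < d.-1) T j + (if binary a then 0 else 1) by [].
have sumT_ge0 : 0 <= \big[Rplus/0]_(j < d.-1) T j by apply: sumR_ge0 => j _; apply: T_ge0.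
case: ifP => [a_bin | _]; last lra.
set k := val (val a i0) in a_bin *.
have k_le_d : (k <= d)%N by exact: leq_trans (leq_addr _ _) (eq_leq (eqP a_bin)).
have j_lt : (minn k d.-2 < d.-1)%N by lia.
have [_] := T_ge (minn k d.-2) (k - minn k d.-2)%N ltac:(lia).
rewrite subnKC ?geq_minl // -(binmonE a_bin) /basis eqxx Rplus_0_r.
move=> T_ge1; apply: Rle_trans T_ge1 _.
exact: (sumR_ge_term (Ordinal j_lt) (fun j : 'I_d.-1 => T_ge0 j)).
Qed.

Lemma poly_fun_curve a : poly_fun (fun w => curve w a).
Proof.
apply: poly_fun_add; last exact: poly_fun_cst.
apply: poly_fun_sum => j.
by repeat first [ exact: poly_fun_cst | exact: poly_fun_id | apply: poly_fun_add
                | apply: poly_fun_mul | apply: poly_fun_pow ].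
Qed.

Lemma curve_cinterior : cinterior (@copositive n d) (curve (-1)).
Proof. exact/copositive_cinterior/curve_coef_ge1. Qed.

Lemma curve_cboundary w : 0 < w -> cboundary (@copositive n d) (curve w).
Proof.
move=> w_gt0; apply: (copositive_cboundary (b := binmon d) (curve_copositive w)
  (curve_root_ge0 (Rlt_le _ _ w_gt0)) (eval_curve_root w)).
by rewrite mono_binmon // subnn /= pow1; lra.
Qed.

End Curve.

Section QuadraticForms.
Variable m : nat.
Implicit Types (A B N : rmat m) (u v x y : 'I_m -> R).

Definition bil A x y : R :=
  \big[Rplus/0]_(i < m) \big[Rplus/0]_(j < m) (x i * A i j * y j).

Definition norm2 v : R := \big[Rplus/0]_(i < m) (v i * v i).

Definition vmx v A : 'I_m -> R := fun j => \big[Rplus/0]_(i < m) (v i * A i j).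

Definition mabs B : R := \big[Rplus/0]_(i < m) \big[Rplus/0]_(j < m) Rabs (B i j).

Lemma bil_vmx A x y : bil A x y = \big[Rplus/0]_(j < m) (vmx x A j * y j).
Proof.
rewrite /bil exchange_big; apply: eq_bigr => j _.
by rewrite /vmx big_distrl; apply: eq_bigr => i _; ring_R.
Qed.

Lemma bil_sym A x y : sym_mat A -> bil A x y = bil A y x.
Proof.
move=> A_sym; rewrite /bil exchange_big; apply: eq_bigr => i _; apply: eq_bigr => j _.
by rewrite A_sym; ring_R.
Qed.

Lemma qform_addZ A x y t : sym_mat A ->
  qform A (fun i => x i + t * y i) = qform A x + 2 * t * bil A x y + t * t * qform A y.
Proof.
move=> A_sym; have -> : 2 * t * bil A x y = t * bil A x y + t * bil A y x.
  by rewrite (bil_sym y x A_sym); ring.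
rewrite /qform /bil !big_distrr -!big_split; apply: eq_bigr => i _.
by rewrite !big_distrr -!big_split; apply: eq_bigr => j _; ring_R.
Qed.

Lemma discr_le (a b c : R) :
  0 <= c -> (forall t, 0 <= a + 2 * t * b + t * t * c) -> b * b <= a * c.
Proof.
move=> c_ge0 h; case: (Rle_lt_or_eq_dec 0 c c_ge0) => [c_gt0 | c0].
  pose t := - b / c; have := h t.
  have -> : a + 2 * t * b + t * t * c = (a * c - b * b) / c by rewrite /t; field; lra.
  move=> hq; have := Rmult_le_pos _ _ hq (Rlt_le _ _ c_gt0).
  have -> : (a * c - b * b) / c * c = a * c - b * b by field; lra.
  lra.
case: (Req_dec b 0) => [-> | b_neq0]; first by rewrite -c0; lra.
pose t := - (a + 1) / (2 * b); have := h t.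
have -> : a + 2 * t * b + t * t * c = -1 by rewrite /t -c0; field.
lra.
Qed.

Lemma psd_cauchy_schwarz A x y : sym_mat A -> psd A ->
  bil A x y * bil A x y <= qform A x * qform A y.
Proof.
by move=> A_sym A_psd; apply: discr_le (A_psd y) _ => t; rewrite -qform_addZ.
Qed.

Lemma norm2_ge0 v : 0 <= norm2 v.
Proof. by apply: sumR_ge0 => i _; apply: Rle_0_sqr. Qed.

Lemma abs_mul_le_norm2 v i j : Rabs (v i * v j) <= norm2 v.
Proof.
have sq_le k : v k * v k <= norm2 v := sumR_ge_term k (fun l => Rle_0_sqr (v l)).
rewrite Rabs_mult; have := sq_le i; have := sq_le j.
have abs_sq k : Rabs (v k) * Rabs (v k) = v k * v k.
  by rewrite -Rabs_mult Rabs_pos_eq //; apply: Rle_0_sqr.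
rewrite -!abs_sq; have := Rabs_pos (v i); have := Rabs_pos (v j); nra.
Qed.

Lemma qform_add_sum (I : finType) A (B : I -> rmat m) (c : I -> R) v :
  qform (fun i j => A i j + \big[Rplus/0]_k (c k * B k i j)) v
  = qform A v + \big[Rplus/0]_k (c k * qform (B k) v).
Proof.
transitivity (qform A v + \big[Rplus/0]_(i < m) \big[Rplus/0]_(j < m)
                \big[Rplus/0]_k (c k * (v i * B k i j * v j))).
  rewrite /qform -big_split; apply: eq_bigr => i _; rewrite -big_split.
  apply: eq_bigr => j _; rewrite Rmult_plus_distr_l Rmult_plus_distr_r big_distrr big_distrl.
  by congr (_ + _); apply: eq_bigr => k _; ring_R.
congr (_ + _); transitivity (\big[Rplus/0]_k \big[Rplus/0]_(i < m) \big[Rplus/0]_(j < m)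
                                (c k * (v i * B k i j * v j))).
  by rewrite [RHS]exchange_big; apply: eq_bigr => i _; rewrite [RHS]exchange_big.
by apply: eq_bigr => k _; rewrite /qform big_distrr; apply: eq_bigr => i _; rewrite big_distrr.
Qed.

Lemma mabs_ge0 B : 0 <= mabs B.
Proof. by apply: sumR_ge0 => i _; apply: sumR_ge0 => j _; apply: Rabs_pos. Qed.

Lemma qform_abs_le B v : Rabs (qform B v) <= mabs B * norm2 v.
Proof.
apply: Rle_trans (sumR_abs_le _ _ _) _; rewrite /mabs big_distrl.
apply: sumR_le => i _; apply: Rle_trans (sumR_abs_le _ _ _) _; rewrite big_distrl.
apply: sumR_le => j _; rewrite (_ : v i * B i j * v j = B i j * (v i * v j)); last by ring.
rewrite Rabs_mult; apply: Rmult_le_compat_l; [exact: Rabs_pos | exact: abs_mul_le_norm2].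
Qed.

Lemma norm2_vmx_le_qform A v : sym_mat A -> psd A ->
  norm2 (vmx v A) <= mabs A * qform A v.
Proof.
move=> A_sym A_psd; set u := vmx v A.
have cs := psd_cauchy_schwarz v u A_sym A_psd.
have norm2u : norm2 u = bil A v u by rewrite bil_vmx.
rewrite -norm2u in cs.
have := Rle_abs (qform A u); have := qform_abs_le A u.
have := A_psd v; have := norm2_ge0 u; have := mabs_ge0 A.
case: (Rle_lt_or_eq_dec 0 (norm2 u) (norm2_ge0 u)) => [nu_gt0 | <-]; last nra.
move=> *; apply: (Rmult_le_reg_l (norm2 u)) => //; nra.
Qed.

Lemma vmx_bounded N : exists c, 0 <= c /\ forall u, norm2 (vmx u N) <= c * norm2 u.
Proof.
exists (\big[Rplus/0]_(j < m) mabs (fun i k => N i j * N k j)); split.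
  by apply: sumR_ge0 => j _; apply: mabs_ge0.
move=> u; rewrite /norm2 big_distrl; apply: sumR_le => j _.
have -> : vmx u N j * vmx u N j = qform (fun i k => N i j * N k j) u.
  rewrite /vmx /qform big_distrl; apply: eq_bigr => i _.
  by rewrite big_distrr; apply: eq_bigr => k _; ring_R.
exact: Rle_trans (Rle_abs _) (qform_abs_le _ _).
Qed.

Lemma mx_vmx A v j : (\row_i v i *m mx A)%R ord0 j = vmx v A j.
Proof. by rewrite mxE; apply: eq_bigr => i _; rewrite !mxE. Qed.

Lemma det_neq0_inverse A : (\det (mx A) != 0)%R ->
  exists N, forall v j, v j = vmx (vmx v A) N j.
Proof.
move=> detA; have A_unit : mx A \in unitmx by rewrite unitmxE GRing.unitfE.
exists (fun i j => invmx (mx A) i j) => v j.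
transitivity ((\row_i v i)%R ord0 j); first by rewrite mxE.
rewrite -{1}(mulmxK A_unit (\row_i v i)%R) mxE.
by apply: eq_bigr => k _; rewrite mx_vmx.
Qed.

Lemma psd_det_coercive A : sym_mat A -> psd A -> (\det (mx A) != 0)%R ->
  exists c, 0 <= c /\ forall v, norm2 v <= c * qform A v.
Proof.
move=> A_sym A_psd /det_neq0_inverse [N hN]; have [c [c_ge0 hc]] := vmx_bounded N.
exists (c * mabs A); split=> [|v]; first exact/Rmult_le_pos/mabs_ge0.
have -> : norm2 v = norm2 (vmx (vmx v A) N) by apply: eq_bigr => i _; rewrite -hN.
apply: Rle_trans (hc _) _; rewrite Rmult_assoc.
exact/Rmult_le_compat_l/norm2_vmx_le_qform.
Qed.

Lemma pd_det_neq0 A : pd A -> (\det (mx A) != 0)%R.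
Proof.
move=> A_pd; apply/negP => /det0P [v v_neq0 vA0].
have [i vi_neq0] : exists i, v ord0 i <> 0.
  apply: NNPP => h; move/negP: v_neq0; apply; apply/eqP/rowP => i; rewrite !mxE.
  by apply: NNPP => vi; apply: h; exists i.
have := A_pd _ (ex_intro _ i vi_neq0).
rewrite [qform _ _]bil_vmx big1 => [|j _]; first lra.
have : (\row_k v ord0 k *m mx A)%R ord0 j = 0.
  have -> : (\row_k v ord0 k)%R = v by apply/rowP => k; rewrite mxE.
  by rewrite vA0 mxE.
by rewrite mx_vmx => ->; ring.
Qed.

End QuadraticForms.

Section LMI.
Variables n d m : nat.
Variables (L0 : rmat m) (La : mon n d -> rmat m).
Hypotheses (L0_sym : sym_mat L0) (La_sym : forall a, sym_mat (La a)).
Local Notation L := (pencil L0 La).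

Lemma pencil_sym f : sym_mat (L f).
Proof.
by move=> i j; rewrite /pencil L0_sym; congr (_ + _); apply: eq_bigr => a _; rewrite La_sym.
Qed.

Lemma pencil_shift f g i j :
  L g i j = L f i j + \big[Rplus/0]_a ((g a - f a) * La a i j).
Proof.
rewrite /pencil Rplus_assoc -big_split; congr (_ + _).
by apply: eq_bigr => a _; ring_R.
Qed.


Lemma poly_fun_det_pencil (F : R -> form n d) :
  (forall a, poly_fun (fun w => F w a)) -> poly_fun (fun w => \det (mx (L (F w))))%R.
Proof.
move=> hF; apply: poly_fun_det => i j; apply: poly_fun_add; first exact: poly_fun_cst.
by apply: poly_fun_sum => a; apply: poly_fun_mul; [apply: hF | apply: poly_fun_cst].
Qed.

Hypothesis L_copositive : forall f, copositive f <-> psd (L f).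

(* Coercivity of L f on the sphere survives perturbations of f of size
   eps = 1 / (c K + 1), where K bounds the perturbation directions. *)
Lemma lmi_cinterior f : psd (L f) -> (\det (mx (L f)) != 0)%R ->
  cinterior (@copositive n d) f.
Proof.
move=> Lf_psd Lf_det.
have [c [c_ge0 hc]] := psd_det_coercive (pencil_sym f) Lf_psd Lf_det.
pose K := \big[Rplus/0]_a mabs (La a).
have K_ge0 : 0 <= K by apply: sumR_ge0 => a _; apply: mabs_ge0.
pose eps := / (c * K + 1).
have eps_gt0 : 0 < eps by apply: Rinv_0_lt_compat; nra.
have eps_cK : eps * K * c = 1 - eps by rewrite /eps; field; nra.
exists eps; split=> // g hg; apply/L_copositive => v.
have -> : qform (L g) v = qform (L f) v + \big[Rplus/0]_a ((g a - f a) * qform (La a) v).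
  rewrite -qform_add_sum /qform; apply: eq_bigr => i _; apply: eq_bigr => j _.
  by rewrite (pencil_shift f).
have shift_ge : - (eps * norm2 v) * K <= \big[Rplus/0]_a ((g a - f a) * qform (La a) v).
  rewrite big_distrr; apply: sumR_le => a _.
  have := Rle_abs (- ((g a - f a) * qform (La a) v)); rewrite Rabs_Ropp Rabs_mult.
  have ga_close : Rabs (g a - f a) <= eps.
    by rewrite Rabs_minus_sym; have := cdist_ge f g a; lra.
  have := Rmult_le_compat _ _ _ _ (Rabs_pos _) (Rabs_pos _) ga_close (qform_abs_le (La a) v).
  rewrite /=; lra.
have eK_ge0 : 0 <= eps * K by apply: Rmult_le_pos; lra.
have := Rmult_le_compat_l _ _ _ eK_ge0 (hc v).
have -> : eps * K * (c * qform (L f) v) = (1 - eps) * qform (L f) v.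
  by rewrite -eps_cK; ring.
have := Lf_psd v; nra.
Qed.

Lemma lmi_det_eq0 f : copositive f -> cboundary (@copositive n d) f ->
  (\det (mx (L f)) = 0)%R.
Proof.
move=> f_copos f_bd; apply/eqP/negPn/negP => Lf_det.
exact: cinterior_not_cboundary (lmi_cinterior ((L_copositive f).1 f_copos) Lf_det) f_bd.
Qed.

End LMI.

Theorem mainTheorem17 (n d : nat) (hn : (2 <= n)%N) (hd : (2 <= d)%N) :
  (~ exists phi : form n d -> R,
       poly_in_coeffs phi /\
       (forall f, cinterior (@copositive n d) f -> (0 < phi f)%Re) /\
       (forall f, cboundary (@copositive n d) f -> phi f = 0%Re)) /\
  ~ lmi_representable n d.
Proof.
case: n hn => [|[|n']] // _.
have curve_zero (phi : form n'.+2 d -> R) :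
    poly_fun (fun w => phi (curve w)) ->
    (forall f, copositive f -> cboundary (@copositive _ d) f -> phi f = 0) ->
    phi (curve (-1)) = 0.
  move=> phi_poly phi_bd; apply: (poly_fun_eq0 phi_poly) => w w_gt0.
  exact: phi_bd (curve_copositive hd w) (curve_cboundary _ hd w_gt0).
split.
- move=> [phi [phi_poly [phi_int phi_bd]]].
  have := phi_int _ (curve_cinterior n' hd).
  rewrite curve_zero; first lra.
    exact: poly_fun_poly_in_coeffs phi_poly (@poly_fun_curve n' d).
  by move=> f _; apply: phi_bd.
- move=> [m [L0 [La [L0_sym [La_sym [L_copos L_pd]]]]]].
  have := pd_det_neq0 (L_pd _ (curve_cinterior n' hd)).
  move/eqP; apply; apply: (curve_zero (fun f => \det (mx (pencil L0 La f)))%R).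
    exact: poly_fun_det_pencil (@poly_fun_curve n' d).
  exact: lmi_det_eq0.
Qed.
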